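(* Let $0<p<1$ and let $\{a_n\}_{n\geq 0}$ be a sequence of non-negative real numbers such that $\left\{\frac{1}{n+1}a^x_n(p)\right\}_{n\geq 0}$ converges to a finite limit $a\in\mathbb{R}$, where $$a^x_n(p)=\sum_{i=0}^{\lfloor pn-\epsilon(n)\rfloor}w_n^i(p)\, a_i.$$ Then $\{a^*_n\}_{n\geq 0}$ converges to $a$.
   Context: $a^*_n=\frac{1}{n+1}\sum_{i=0}^n a_i$. For $0<p<1$, $n\in\mathbb{N}$ and $0\le i\le n$, $w_n^i(p)=\sum_{j=i}^n\binom{j}{i}p^i(1-p)^{j-i}$. $\epsilon(n)=\sqrt{n}\log n$ for $n\geq2$ and $\epsilon(n)=1$ otherwise; a sum whose upper index is negative is $0$. *)

From Stdlib Require Import Reals Lra Lia ZArith List.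
Open Scope R_scope.

(* sumR m n f = f m + f (m+1) + ... + f n  (0 if n < m). *)
Definition sumR (m n : nat) (f : nat -> R) : R :=
  fold_right Rplus 0 (map f (seq m (S n - m))).

Definition astar (a : nat -> R) (n : nat) : R :=
  / (INR n + 1) * sumR 0 n a.

Definition w (p : R) (n i : nat) : R :=
  sumR i n (fun j => C j i * p ^ i * (1 - p) ^ (j - i)).

Definition eps (n : nat) : R :=
  if (2 <=? n)%nat then sqrt (INR n) * ln (INR n) else 1.

(* a^x_n(p) = sum_{i=0}^{floor(p n - eps n)} w_n^i(p) a_i, empty (=0) when
   the upper index is negative. Int_part x is the floor of x. *)
Definition ax (a : nat -> R) (p : R) (n : nat) : R :=
  let m := Int_part (p * INR n - eps n) in
  if (m <? 0)%Z then 0 else sumR 0 (Z.to_nat m) (fun i => w p n i * a i).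

From Stdlib Require Import Reals Lra Lia List ZArith.
Open Scope R_scope.

(* With X ~ Bin(n+1, p) one has p w_n^i(p) = P(X > i).  For k = floor(pn - eps n) and
   S_k = a_0 + ... + a_k, monotonicity of the CDF and a_i >= 0 give
   (1 - P(X <= k)) S_k <= p a^x_n <= S_k.  Chebyshev bounds P(X <= k) by
   (n+1)p(1-p) / eps(n)^2 <= 2 / ln^2 n -> 0, and (n+1)p / (k+1) -> 1 since eps(n) = o(n).
   So a*_k = S_k / (k+1) is squeezed to a along k = k(n), and k(n) moves up by at most
   one at a time, so it passes through every large k. *)

Lemma sumR_empty m n f : (n < m)%nat -> sumR m n f = 0.
Proof. intro H. unfold sumR. replace (S n - m)%nat with 0%nat by lia. reflexivity. Qed.

Lemma sumR_succ m n f : (m <= S n)%nat -> sumR m (S n) f = sumR m n f + f (S n).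
Proof.
  intro H. unfold sumR. replace (S (S n) - m)%nat with (S (S n - m)) by lia.
  rewrite seq_S, map_app, fold_right_app. cbn [fold_right map].
  replace (m + (S n - m))%nat with (S n) by lia.
  induction (map f (seq m (S n - m))) as [|x l IH]; cbn [fold_right]; lra.
Qed.

Lemma sumR_0_sum_f_R0 n f : sumR 0 n f = sum_f_R0 f n.
Proof.
  induction n as [|n IH]; [unfold sumR; simpl; lra|].
  rewrite sumR_succ, IH by lia. reflexivity.
Qed.

Lemma sum_f_R0_le_ext f k d : (forall j, 0 <= f j) -> sum_f_R0 f k <= sum_f_R0 f (k + d).
Proof.
  intro Hf. induction d as [|d IH]; [rewrite Nat.add_0_r; lra|].
  rewrite Nat.add_succ_r. simpl. specialize (Hf (S (k + d))). lra.
Qed.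

Section Binomial.
Variable p : R.

Fixpoint binom_pmf (N k : nat) : R :=
  match N, k with
  | O, O => 1
  | O, S _ => 0
  | S N', O => (1 - p) * binom_pmf N' O
  | S N', S k' => (1 - p) * binom_pmf N' (S k') + p * binom_pmf N' k'
  end.

Definition binom_cdf (N i : nat) : R := sum_f_R0 (binom_pmf N) i.

Lemma binom_pmf_out N k : (N < k)%nat -> binom_pmf N k = 0.
Proof.
  revert k; induction N as [|N IH]; intros [|k] H; simpl; try lia; try lra.
  rewrite !IH by lia. ring.
Qed.

Lemma binom_pmf_closed_form N k : (k <= N)%nat ->
  binom_pmf N k = C N k * p ^ k * (1 - p) ^ (N - k).
Proof.
  assert (C_n0 : forall n, C n 0 = 1).
  { intro n. unfold C. rewrite Nat.sub_0_r. simpl. field. apply INR_fact_neq_0. }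
  assert (C_nn : forall n, C n n = 1).
  { intro n. unfold C. rewrite Nat.sub_diag. simpl. field. apply INR_fact_neq_0. }
  revert k; induction N as [|N IH]; intros k H.
  - replace k with 0%nat by lia. simpl. rewrite C_n0. ring.
  - destruct k as [|k]; simpl.
    + rewrite IH, !C_n0, Nat.sub_0_r by lia. simpl. ring.
    + destruct (Nat.eq_dec k N) as [->|Hk].
      * rewrite binom_pmf_out, IH, !C_nn, Nat.sub_diag by lia. simpl. ring.
      * rewrite !IH, <- pascal by lia.
        replace (N - k)%nat with (S (N - S k)) by lia. simpl. ring.
Qed.

Lemma binom_cdf_succ N i : binom_cdf (S N) i = binom_cdf N i - p * binom_pmf N i.
Proof. unfold binom_cdf. induction i as [|i IH]; simpl in *; [|rewrite IH]; ring. Qed.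

Lemma binom_cdf_full N i : (N <= i)%nat -> binom_cdf N i = 1.
Proof.
  revert i; induction N as [|N IH]; intros i H.
  - unfold binom_cdf. induction i as [|i IHi]; [reflexivity|].
    rewrite tech5, IHi by lia. simpl. ring.
  - rewrite binom_cdf_succ, IH, binom_pmf_out by lia. ring.
Qed.

(* The tail P(Bin(n+1,p) > i) splits by the trial j+1 at which the (i+1)-th
   success occurs; that event has probability p * C(j,i) p^i (1-p)^(j-i). *)
Lemma p_mul_w n i : p * w p n i = 1 - binom_cdf (S n) i.
Proof.
  unfold w. induction n as [|n IH].
  - destruct i as [|i].
    + unfold sumR, binom_cdf. simpl. unfold C. simpl. field.
    + rewrite sumR_empty, binom_cdf_full by lia. ring.
  - destruct (le_lt_dec i (S n)) as [Hi|Hi].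
    + rewrite sumR_succ, Rmult_plus_distr_l, IH, <- binom_pmf_closed_form by lia.
      rewrite (binom_cdf_succ (S n)). ring.
    + rewrite sumR_empty, binom_cdf_full by lia. ring.
Qed.

Lemma binom_moment_shift f N K :
  sum_f_R0 (fun j => f j * binom_pmf (S N) j) (S K) =
  (1 - p) * sum_f_R0 (fun j => f j * binom_pmf N j) (S K)
  + p * sum_f_R0 (fun j => f (S j) * binom_pmf N j) K.
Proof.
  induction K as [|K IH]; [simpl; ring|].
  rewrite tech5, IH. simpl. ring.
Qed.

Lemma binom_quadratic_moment N K a b c : (N <= K)%nat ->
  sum_f_R0 (fun j => (a + b * INR j + c * INR j ^ 2) * binom_pmf N j) K =
  a + b * (INR N * p) + c * (INR N * p * (1 - p) + (INR N * p) ^ 2).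
Proof.
  revert K a b c; induction N as [|N IH]; intros K a b c H.
  - induction K as [|K IHK]; [simpl; ring|].
    rewrite tech5, IHK by lia. simpl. ring.
  - destruct K as [|K]; [lia|].
    rewrite (binom_moment_shift (fun j => a + b * INR j + c * INR j ^ 2)).
    rewrite (sum_eq (fun j => (a + b * INR (S j) + c * INR (S j) ^ 2) * binom_pmf N j)
               (fun j => ((a + b + c) + (b + 2 * c) * INR j + c * INR j ^ 2) * binom_pmf N j))
      by (intros; rewrite S_INR; ring).
    rewrite !IH by lia. rewrite S_INR. ring.
Qed.

Hypothesis Hp : 0 <= p <= 1.

Lemma binom_pmf_ge0 N k : 0 <= binom_pmf N k.
Proof.
  revert k; induction N as [|N IH]; intros [|k]; simpl; try lra.
  - specialize (IH 0%nat). nra.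
  - pose proof (IH k). pose proof (IH (S k)). nra.
Qed.

Lemma binom_cdf_ge0 N i : 0 <= binom_cdf N i.
Proof. apply cond_pos_sum, binom_pmf_ge0. Qed.

Lemma binom_cdf_le N i k : (i <= k)%nat -> binom_cdf N i <= binom_cdf N k.
Proof.
  intro H. replace k with (i + (k - i))%nat by lia.
  apply sum_f_R0_le_ext, binom_pmf_ge0.
Qed.

Lemma binom_cdf_chebyshev N k : INR k < INR N * p ->
  binom_cdf N k * (INR N * p - INR k) ^ 2 <= INR N * p * (1 - p).
Proof.
  intro Hk. set (mu := INR N * p) in *.
  set (sq_dev j := ((mu ^ 2) + (-2 * mu) * INR j + 1 * INR j ^ 2) * binom_pmf N j).
  assert (Hdev : forall j, sq_dev j = (INR j - mu) ^ 2 * binom_pmf N j)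
    by (intro j; unfold sq_dev; ring).
  assert (Hdev0 : forall j, 0 <= sq_dev j).
  { intro j. rewrite Hdev. apply Rmult_le_pos; [apply pow2_ge_0|apply binom_pmf_ge0]. }
  apply Rle_trans with (sum_f_R0 sq_dev k).
  - unfold binom_cdf. rewrite Rmult_comm, scal_sum. apply sum_Rle.
    intros j Hj. apply le_INR in Hj. rewrite Hdev.
    pose proof (binom_pmf_ge0 N j). rewrite Rmult_comm. apply Rmult_le_compat_r; [lra|].
    assert (0 <= (INR k - INR j) * (2 * mu - INR j - INR k)) by (apply Rmult_le_pos; lra).
    nra.
  - apply Rle_trans with (sum_f_R0 sq_dev (k + N)); [apply sum_f_R0_le_ext, Hdev0|].
    unfold sq_dev. rewrite binom_quadratic_moment by lia. unfold mu. nra.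
Qed.

Lemma p_mul_w_sum_bounds (a : nat -> R) n k : (forall i, 0 <= a i) ->
  (1 - binom_cdf (S n) k) * sum_f_R0 a k <= p * sum_f_R0 (fun i => w p n i * a i) k
  <= sum_f_R0 a k.
Proof.
  intro Ha.
  replace (p * sum_f_R0 (fun i => w p n i * a i) k)
    with (sum_f_R0 (fun i => (1 - binom_cdf (S n) i) * a i) k)
    by (rewrite scal_sum; apply sum_eq; intros i _; rewrite <- p_mul_w; ring).
  split; [rewrite scal_sum|]; apply sum_Rle; intros i Hi; pose proof (Ha i).
  - pose proof (binom_cdf_le (S n) i k Hi). nra.
  - pose proof (binom_cdf_ge0 (S n) i). nra.
Qed.

End Binomial.

Lemma cv_infty_INR : cv_infty INR.
Proof.
  intro M. destruct (INR_archimed 1 M) as [N HN]; [lra|].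
  exists N. intros n Hn. apply le_INR in Hn. lra.
Qed.

Lemma cv_infty_sqrt u : cv_infty u -> cv_infty (fun n => sqrt (u n)).
Proof.
  intros Hu M. destruct (Hu (Rmax M 0 ^ 2)) as [N HN]. exists N. intros n Hn.
  specialize (HN n Hn). pose proof (Rmax_l M 0). pose proof (Rmax_r M 0).
  apply Rle_lt_trans with (sqrt (Rmax M 0 ^ 2)); [rewrite sqrt_pow2; lra|].
  apply sqrt_lt_1_alt. split; [apply pow2_ge_0|lra].
Qed.

Lemma cv_infty_ln_INR : cv_infty (fun n => ln (INR n)).
Proof.
  intro M. destruct (cv_infty_INR (exp M)) as [N HN]. exists N. intros n Hn.
  rewrite <- (ln_exp M). apply ln_increasing; [apply exp_pos|auto].
Qed.

Lemma eps_eq n : (2 <= n)%nat -> eps n = sqrt (INR n) * ln (INR n).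
Proof. intro H. unfold eps. apply Nat.leb_le in H. now rewrite H. Qed.

Lemma ln_INR_pos n : (2 <= n)%nat -> 0 < ln (INR n).
Proof.
  intro H. rewrite <- ln_1. apply le_INR in H. simpl in H. apply ln_increasing; lra.
Qed.

Lemma eps_pos n : 0 < eps n.
Proof.
  destruct (le_lt_dec 2 n) as [H|H].
  2:{ unfold eps. apply Nat.leb_gt in H. rewrite H. lra. }
  rewrite eps_eq by lia. apply Rmult_lt_0_compat; [|now apply ln_INR_pos].
  apply sqrt_lt_R0. apply le_INR in H. simpl in H. lra.
Qed.

Lemma eps_sqr n : (2 <= n)%nat -> eps n ^ 2 = INR n * ln (INR n) ^ 2.
Proof.
  intro H. rewrite eps_eq by lia.
  replace ((sqrt (INR n) * ln (INR n)) ^ 2) with (sqrt (INR n) ^ 2 * ln (INR n) ^ 2) by ring.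
  rewrite pow2_sqrt; [ring|apply pos_INR].
Qed.

Lemma eps_le_succ n : (2 <= n)%nat -> eps n <= eps (S n).
Proof.
  intro H. rewrite !eps_eq, S_INR by lia. pose proof (ln_INR_pos n H).
  apply le_INR in H. simpl in H.
  apply Rmult_le_compat; [apply sqrt_pos|lra|apply sqrt_le_1_alt; lra|].
  left; apply ln_increasing; lra.
Qed.

(* With s = n^(1/4) one has ln n = 4 ln s < 4 s, hence eps n < 4 s^3 = o(n). *)
Lemma eps_lt_quartic n : (2 <= n)%nat ->
  let s := sqrt (sqrt (INR n)) in 1 < s /\ INR n = s ^ 4 /\ eps n < 4 * s ^ 3.
Proof.
  intros H s. apply le_INR in H. simpl in H.
  set (t := sqrt (INR n)) in s.
  assert (Ht : 1 < t) by (unfold t; rewrite <- sqrt_1; apply sqrt_lt_1_alt; lra).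
  assert (Hs : 1 < s) by (unfold s; rewrite <- sqrt_1; apply sqrt_lt_1_alt; lra).
  assert (Htt : t * t = INR n) by (apply sqrt_sqrt; lra).
  assert (Hss : s * s = t) by (apply sqrt_sqrt; lra).
  assert (Hln : ln (INR n) = 4 * ln s) by (rewrite <- Htt, <- Hss, !ln_mult by nra; ring).
  assert (Hls0 : 0 < ln s) by (rewrite <- ln_1; apply ln_increasing; lra).
  assert (Hls : ln s < s).
  { pose proof (exp_ineq1 (ln s)). rewrite exp_ln in H0 by lra. lra. }
  split; [lra|split].
  - rewrite <- Htt, <- Hss. ring.
  - rewrite eps_eq by (apply INR_le; simpl; lra). fold t. rewrite Hln, <- Hss. nra.
Qed.

Lemma eps_negligible d : 0 < d ->
  exists N, forall n, (N <= n)%nat -> eps n + 1 <= d * INR n.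
Proof.
  intro Hd. destruct (cv_infty_sqrt _ (cv_infty_sqrt _ cv_infty_INR) (5 / d)) as [N HN].
  exists (max N 2). intros n Hn. specialize (HN n ltac:(lia)). cbv beta in HN.
  destruct (eps_lt_quartic n ltac:(lia)) as [Hs [Hn4 Heps]].
  set (s := sqrt (sqrt (INR n))) in *. rewrite Hn4.
  assert (Hds : 5 <= d * s)
    by (apply (Rmult_lt_compat_l d) in HN; [field_simplify in HN|]; lra).
  assert (1 < s ^ 3) by (apply Rlt_pow_R1; [lra|lia]).
  replace (s ^ 4) with (s * s ^ 3) by ring. nra.
Qed.

Lemma nat_seq_attains (f : nat -> nat) N0 :
  (forall n, (N0 <= n)%nat -> (f (S n) <= S (f n))%nat) ->
  forall n0 d k, (N0 <= n0)%nat -> (f n0 <= k <= f (n0 + d))%nat ->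
  exists n, (n0 <= n)%nat /\ f n = k.
Proof.
  intros Hstep n0 d. induction d as [|d IH]; intros k Hn0 Hk.
  - exists n0. rewrite Nat.add_0_r in Hk. split; lia.
  - destruct (le_lt_dec k (f (n0 + d)%nat)) as [Hle|Hlt]; [apply IH; lia|].
    exists (n0 + S d)%nat. split; [lia|].
    rewrite Nat.add_succ_r in *. specialize (Hstep (n0 + d)%nat ltac:(lia)). lia.
Qed.

Lemma bracket_gap_le x y z : Rabs z <= 1 / 2 -> (1 - z) * x <= y <= x ->
  x - y <= 2 * Rabs y * Rabs z.
Proof.
  intros Hz [Hlo Hhi]. pose proof (Rabs_pos z).
  pose proof (Rle_abs z). pose proof (Rle_abs (- z)).
  pose proof (Rle_abs y). pose proof (Rle_abs (- y)). rewrite Rabs_Ropp in *.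
  destruct (Rle_lt_dec 0 x) as [Hx|Hx].
  - assert (x <= 2 * Rabs y) by nra.
    assert (0 <= (Rabs z - z) * x) by (apply Rmult_le_pos; lra).
    assert (0 <= Rabs z * (2 * Rabs y - x)) by (apply Rmult_le_pos; lra).
    nra.
  - assert (0 <= (Rabs z + z) * (- x)) by (apply Rmult_le_pos; lra).
    assert (0 <= Rabs z * (2 * Rabs y + x)) by (apply Rmult_le_pos; lra).
    nra.
Qed.

Lemma Un_cv_of_bracket (A Y g : nat -> R) (m : nat -> nat) (l : R) :
  Un_cv Y l -> Un_cv g 0 ->
  (forall K, exists N, forall n, (N <= n)%nat -> (K <= m n)%nat) ->
  (exists N, forall n, (N <= n)%nat ->
     (m (S n) <= S (m n))%nat /\ (1 - g n) * A (m n) <= Y n <= A (m n)) ->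
  Un_cv A l.
Proof.
  intros HY Hg Hm [N0 Hbr] e He.
  set (c := Rabs l + 1). assert (Hc : 0 < c) by (pose proof (Rabs_pos l); unfold c; lra).
  destruct (HY (Rmin (e / 2) 1)) as [N1 HN1]; [apply Rmin_pos; lra|].
  destruct (Hg (Rmin (1 / 2) (e / (4 * c)))) as [N2 HN2].
  { apply Rmin_pos; [lra|apply Rdiv_lt_0_compat; lra]. }
  set (n0 := max N0 (max N1 N2)).
  exists (m n0). intros k Hk.
  destruct (Hm k) as [N3 HN3].
  destruct (nat_seq_attains m N0 (fun n Hn => proj1 (Hbr n Hn)) n0 (max N3 n0 - n0) k)
    as [n [Hn Hmn]]; [lia|split; [lia|apply HN3; lia]|].
  subst k. destruct (proj2 (Hbr n ltac:(lia))) as [Hlo Hhi].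
  specialize (HN1 n ltac:(lia)). specialize (HN2 n ltac:(lia)).
  unfold R_dist in *. rewrite Rminus_0_r in HN2.
  pose proof (Rmin_l (e / 2) 1). pose proof (Rmin_r (e / 2) 1).
  pose proof (Rmin_l (1 / 2) (e / (4 * c))). pose proof (Rmin_r (1 / 2) (e / (4 * c))).
  set (x := A (m n)) in *. set (y := Y n) in *. set (z := g n) in *.
  assert (Hy : Rabs y <= c).
  { replace y with (l + (y - l)) by ring. unfold c.
    pose proof (Rabs_triang l (y - l)). lra. }
  assert (Hgap : x - y <= 2 * c * Rabs z).
  { apply Rle_trans with (2 * Rabs y * Rabs z); [apply bracket_gap_le; lra|].
    pose proof (Rabs_pos z). nra. }
  assert (Hzc : 2 * c * Rabs z <= e / 2).
  { apply Rle_trans with (2 * c * (e / (4 * c))); [apply Rmult_le_compat_l; lra|].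
    right; field; lra. }
  replace (x - l) with ((x - y) + (y - l)) by ring.
  apply Rabs_def2 in HN1. apply Rabs_def1; lra.
Qed.

(* Z.to_nat sends a negative index to 0; ax_top is only used once p n - eps n >= 0. *)
Definition ax_top (p : R) (n : nat) : nat := Z.to_nat (Int_part (p * INR n - eps n)).

Lemma ax_top_spec p n : 0 <= p * INR n - eps n ->
  p * INR n - eps n - 1 < INR (ax_top p n) <= p * INR n - eps n.
Proof.
  intro H. destruct (base_Int_part (p * INR n - eps n)) as [H1 H2].
  assert (Hz : (-1 < Int_part (p * INR n - eps n))%Z) by (apply lt_IZR; simpl; lra).
  unfold ax_top. rewrite (INR_IZR_INZ (Z.to_nat _)), Z2Nat.id by lia. lra.
Qed.

Lemma ax_top_eq a p n : 0 <= p * INR n - eps n ->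
  ax a p n = sum_f_R0 (fun i => w p n i * a i) (ax_top p n).
Proof.
  intro H. destruct (base_Int_part (p * INR n - eps n)) as [H1 H2].
  assert (Hz : (-1 < Int_part (p * INR n - eps n))%Z) by (apply lt_IZR; simpl; lra).
  unfold ax. cbv zeta.
  replace (Int_part (p * INR n - eps n) <? 0)%Z with false by (symmetry; apply Z.ltb_ge; lia).
  apply sumR_0_sum_f_R0.
Qed.

Section TopIndex.
Variable p : R.
Hypothesis Hp : 0 < p < 1.

Let Hp01 : 0 <= p <= 1.
Proof. lra. Qed.

Lemma ax_top_succ_le n : (2 <= n)%nat -> (ax_top p (S n) <= S (ax_top p n))%nat.
Proof.
  intro H. unfold ax_top.
  destruct (base_Int_part (p * INR n - eps n)) as [A1 A2].
  destruct (base_Int_part (p * INR (S n) - eps (S n))) as [B1 B2].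
  pose proof (eps_le_succ n H). rewrite S_INR in *.
  assert (Hlt : IZR (Int_part (p * (INR n + 1) - eps (S n)))
                < IZR (Int_part (p * INR n - eps n) + 2)) by (rewrite plus_IZR; simpl; lra).
  apply lt_IZR in Hlt. lia.
Qed.

Lemma ax_top_eventually_defined :
  exists N, forall n, (N <= n)%nat -> (2 <= n)%nat /\ 0 <= p * INR n - eps n.
Proof.
  destruct (eps_negligible p) as [N HN]; [lra|].
  exists (max N 2). intros n Hn. specialize (HN n ltac:(lia)). split; [lia|lra].
Qed.

Lemma ax_top_cv_infty (K : nat) : exists N, forall n, (N <= n)%nat -> (K <= ax_top p n)%nat.
Proof.
  destruct (eps_negligible (p / 2)) as [N1 HN1]; [lra|].
  destruct (cv_infty_INR (2 * INR K / p)) as [N2 HN2].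
  exists (max N1 N2). intros n Hn.
  specialize (HN1 n ltac:(lia)). specialize (HN2 n ltac:(lia)).
  assert (HK : INR K < p / 2 * INR n).
  { apply (Rmult_lt_compat_l (p / 2)) in HN2; [|lra]. field_simplify in HN2; lra. }
  pose proof (pos_INR n).
  destruct (ax_top_spec p n) as [H1 _]; [nra|].
  apply INR_le. lra.
Qed.

Lemma ax_top_ratio_cv : Un_cv (fun n => p * (INR n + 1) / (INR (ax_top p n) + 1)) 1.
Proof.
  intros e He. set (d := p * Rmin e 1 / 4).
  assert (Hd : 0 < d) by (unfold d; pose proof (Rmin_pos e 1 He); nra).
  destruct (eps_negligible d Hd) as [N HN]. exists (max N 1). intros n Hn.
  specialize (HN n ltac:(lia)).
  assert (Hn1 : 1 <= INR n) by (apply (le_INR 1); lia).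
  assert (Hdp : d <= p / 4) by (unfold d; pose proof (Rmin_r e 1); nra).
  pose proof (eps_pos n). pose proof (pos_INR n).
  destruct (ax_top_spec p n) as [H1 H2]; [nra|].
  set (M := INR (ax_top p n) + 1).
  assert (HM1 : p * INR n - eps n < M <= p * INR n - eps n + 1) by (unfold M; lra).
  clearbody M.
  assert (Hdn : d * INR n <= p * e / 4 * INR n).
  { apply Rmult_le_compat_r; [lra|]. unfold d. pose proof (Rmin_l e 1). nra. }
  assert (Hdn' : d * INR n <= p / 4 * INR n) by (apply Rmult_le_compat_r; lra).
  assert (HM : 3 * p * INR n / 4 <= M) by lra.
  assert (Hpen : 0 < p * e * INR n)
    by (apply Rmult_lt_0_compat; [apply Rmult_lt_0_compat|]; lra).
  assert (HeM : e * (3 * p * INR n / 4) <= e * M) by (apply Rmult_le_compat_l; lra).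
  unfold R_dist.
  replace (p * (INR n + 1) / M - 1) with ((p * (INR n + 1) - M) / M) by (field; lra).
  unfold Rdiv. rewrite Rabs_mult, Rabs_inv, (Rabs_right M) by lra.
  apply Rmult_lt_reg_r with M; [lra|]. rewrite Rmult_assoc, Rinv_l, Rmult_1_r by lra.
  apply Rabs_def1; lra.
Qed.

Lemma binom_cdf_ax_top_le n : (2 <= n)%nat -> 0 <= p * INR n - eps n ->
  binom_cdf p (S n) (ax_top p n) * ln (INR n) ^ 2 <= 2.
Proof.
  intros H Hx. set (k := ax_top p n). destruct (ax_top_spec p n Hx) as [_ Hk]. fold k in Hk.
  pose proof (eps_pos n). pose proof (eps_sqr n H).
  assert (Hlt : INR k < INR (S n) * p) by (rewrite S_INR; nra).
  pose proof (binom_cdf_chebyshev p Hp01 (S n) k Hlt) as Hcheb.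
  rewrite S_INR in Hcheb. set (D := (INR n + 1) * p - INR k) in *.
  assert (eps n ^ 2 <= D ^ 2) by (unfold D; nra).
  pose proof (binom_cdf_ge0 p Hp01 (S n) k).
  assert (Hn : 2 <= INR n) by (apply le_INR in H; simpl in H; lra).
  set (L := ln (INR n)) in *. set (g := binom_cdf p (S n) k) in *.
  assert (g * (INR n * L ^ 2) <= (INR n + 1) * p * (1 - p)) by nra.
  assert ((INR n + 1) * p * (1 - p) <= 2 * INR n) by nra.
  nra.
Qed.

Lemma binom_cdf_ax_top_cv : Un_cv (fun n => binom_cdf p (S n) (ax_top p n)) 0.
Proof.
  intros e He. destruct ax_top_eventually_defined as [N1 HN1].
  destruct (cv_infty_ln_INR (Rmax 1 (2 / e))) as [N2 HN2].
  exists (max N1 N2). intros n Hn.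
  destruct (HN1 n ltac:(lia)) as [H2 Hx]. specialize (HN2 n ltac:(lia)).
  pose proof (binom_cdf_ax_top_le n H2 Hx).
  pose proof (binom_cdf_ge0 p Hp01 (S n) (ax_top p n)).
  pose proof (Rmax_l 1 (2 / e)). pose proof (Rmax_r 1 (2 / e)).
  set (L := ln (INR n)) in *. set (g := binom_cdf p (S n) (ax_top p n)) in *.
  assert (HeL : 2 < e * L).
  { assert (H2e : 2 / e < L) by lra.
    apply (Rmult_lt_compat_l e) in H2e; [|lra]. field_simplify in H2e; lra. }
  assert (0 <= g * L * (L - 1)) by (apply Rmult_le_pos; [apply Rmult_le_pos|]; lra).
  assert (g * L < e * L) by nra.
  unfold R_dist. rewrite Rminus_0_r, Rabs_right by lra.
  apply Rmult_lt_reg_r with L; lra.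
Qed.

Lemma astar_ax_top_bracket a n : (forall i, 0 <= a i) -> 0 <= p * INR n - eps n ->
  let k := ax_top p n in
  (1 - binom_cdf p (S n) k) * astar a k
  <= p * (INR n + 1) / (INR k + 1) * (/ (INR n + 1) * ax a p n) <= astar a k.
Proof.
  intros Ha Hx k.
  pose proof (pos_INR n). pose proof (pos_INR k).
  replace (p * (INR n + 1) / (INR k + 1) * (/ (INR n + 1) * ax a p n))
    with (/ (INR k + 1) * (p * ax a p n)) by (field; lra).
  unfold astar. rewrite sumR_0_sum_f_R0, ax_top_eq by exact Hx. fold k.
  destruct (p_mul_w_sum_bounds p Hp01 a n k Ha) as [Hlo Hhi].
  assert (Hinv : 0 < / (INR k + 1)) by (apply Rinv_0_lt_compat; lra).
  split; [rewrite <- Rmult_assoc, (Rmult_comm _ (/ _)), Rmult_assoc|];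
    apply Rmult_le_compat_l; lra.
Qed.

End TopIndex.

Theorem lemma10 (p : R) (a : nat -> R) (l : R) :
  0 < p < 1 ->
  (forall n, 0 <= a n) ->
  Un_cv (fun n => / (INR n + 1) * ax a p n) l ->
  Un_cv (astar a) l.
Proof.
  intros Hp Ha Hx.
  apply (Un_cv_of_bracket (astar a)
           (fun n => p * (INR n + 1) / (INR (ax_top p n) + 1) * (/ (INR n + 1) * ax a p n))
           (fun n => binom_cdf p (S n) (ax_top p n)) (ax_top p) l).
  - rewrite <- (Rmult_1_l l). apply CV_mult; [apply ax_top_ratio_cv|]; assumption.
  - now apply binom_cdf_ax_top_cv.
  - now apply ax_top_cv_infty.
  - destruct (ax_top_eventually_defined p Hp) as [N HN]. exists N. intros n Hn.
    destruct (HN n Hn) as [H2 Hxn].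
    split; [now apply ax_top_succ_le | now apply astar_ax_top_bracket].
Qed.
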